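(* In the group-based tree model described in the context (with arbitrary real edge parameters), let $e$ be a pendant edge of $\mathscr{T}$ with leaf $i$ and internal endpoint $\nu$. Let $j,k$ be leaves distinct from $i$ such that the path between $j$ and $k$ passes through $\nu$. For $a,b,c\in G$ let $w(a,b,c)\in G^m$ assign $a$ to leaf $i$, $b$ to leaf $j$, $c$ to leaf $k$ and $0$ to all other leaves. Then for every $h\in G$, $q_{w(0,-h,h)}\neq 0$ and $$\big[\check f^{(e)}(h)\big]^2=\frac{q_{w(h,-h,0)}\;q_{w(-h,0,h)}}{q_{w(0,-h,h)}}.$$
   Context: Group-based model on a tree. $G$ is a finite abelian group written additively with identity $0$; fix $G\cong\prod_k\mathbb{Z}_{n_k}$ and for $g,h\in G$ put $\hat g(h)=\prod_k\exp(2\pi i\,g_kh_k/n_k)$. The Fourier transform of $a:G\to\mathbb{C}$ is $\check a(g)=\sum_{h\in G}\hat g(h)a(h)$. $\mathscr{T}$ is a finite tree with $m$ leaves, one of which is designated the root leaf $r$. Each edge $e$ carries a function $\psi^{(e)}:G\to\mathbb{R}$ with $\sum_g\psi^{(e)}(g)=0$ and $\psi^{(e)}(g)=\psi^{(e)}(-g)$ (its values at $g\ne0$ are the edge parameters of $e$); put $Q^{(e)}_{g,h}=\psi^{(e)}(h-g)$, $P^{(e)}=\exp(Q^{(e)})$, $f^{(e)}(h)=P^{(e)}_{0,h}$, so $P^{(e)}_{g,h}=f^{(e)}(h-g)$. Edges are directed away from $r$. For $\mathbf g\in G^{m}$ (indexed by all leaves, $r$ included), $p_{\mathbf g}=\sum_\sigma\prod_{e=(u\to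 v)}P^{(e)}_{\sigma(u),\sigma(v)}$, the sum over all maps $\sigma$ from vertices to $G$ with $\sigma(r)=0$ and $\sigma$ equal to $\mathbf g$ on the leaves. The Fourier transform is $q_{\mathbf g}=\sum_{\mathbf h\in G^m}\prod_{x}\hat g_x(h_x)\,p_{\mathbf h}$. For an edge $e$, $\Lambda(e)$ is the set of leaves whose path to $r$ contains $e$, and ${}^*g_e=\sum_{x\in\Lambda(e)}g_x$. It is a known fact (Hendy; Evans–Speed) that $q_{\mathbf g}=\prod_{e}\check f^{(e)}({}^*g_e)$ for all $\mathbf g\in G^m$. *)

From HB Require Import structures.
From mathcomp Require Import all_boot all_algebra.
From Stdlib Require Import Reals.

Set Implicit Arguments.
Unset Strict Implicit.
Unset Printing Implicit Defensive.

Definition C := (R * R)%type.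
Definition C0 : C := (R0, R0).
Definition C1 : C := (R1, R0).
Definition RtoC (x : R) : C := (x, R0).
Definition Cadd (z w : C) : C := (Rplus z.1 w.1, Rplus z.2 w.2).
Definition Cmul (z w : C) : C :=
  (Rminus (Rmult z.1 w.1) (Rmult z.2 w.2), Rplus (Rmult z.1 w.2) (Rmult z.2 w.1)).
Definition Cinv (z : C) : C :=
  let d := Rplus (Rmult z.1 z.1) (Rmult z.2 z.2) in
  (Rdiv z.1 d, Ropp (Rdiv z.2 d)).
Definition Cdiv (z w : C) : C := Cmul z (Cinv w).
Definition Cexp2pi (t : R) : C := (cos (Rmult (Rmult 2 PI) t), sin (Rmult (Rmult 2 PI) t)).

(* The finite abelian group G = Z_{n_1} x ... x Z_{n_r}.                     *)
(* [ns] is the list of moduli (all assumed >= 1); the factor for modulus n   *)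
(* is 'I_(n.-1).+1 = Z/nZ.  The empty product is represented by Z_1 = 'I_1.  *)
Fixpoint Gty (ns : seq nat) : finType :=
  match ns with
  | [::] => 'I_1
  | n :: ns' => ('I_(n.-1).+1 * Gty ns')%type
  end.

Fixpoint gzero (ns : seq nat) : Gty ns :=
  match ns return Gty ns with
  | [::] => ord0
  | n :: ns' => (@GRing.zero 'I_(n.-1).+1, gzero ns')
  end.

Fixpoint gadd (ns : seq nat) : Gty ns -> Gty ns -> Gty ns :=
  match ns return Gty ns -> Gty ns -> Gty ns with
  | [::] => fun _ _ => ord0
  | n :: ns' => fun g h : ('I_(n.-1).+1 * Gty ns')%type =>
      (GRing.add g.1 h.1, gadd g.2 h.2)
  end.

Fixpoint gopp (ns : seq nat) : Gty ns -> Gty ns :=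
  match ns return Gty ns -> Gty ns with
  | [::] => fun _ => ord0
  | n :: ns' => fun g : ('I_(n.-1).+1 * Gty ns')%type =>
      (GRing.opp g.1, gopp g.2)
  end.

Arguments gzero {ns}.

Fixpoint ghat (ns : seq nat) : Gty ns -> Gty ns -> C :=
  match ns return Gty ns -> Gty ns -> C with
  | [::] => fun _ _ => C1
  | n :: ns' => fun g h : ('I_(n.-1).+1 * Gty ns')%type =>
      Cmul (Cexp2pi (Rdiv (INR (nat_of_ord g.1 * nat_of_ord h.1)) (INR n)))
           (ghat g.2 h.2)
  end.

Notation "\Rsum_ ( i : T ) F" := (\big[Rplus/R0]_(i : T) F)
  (at level 41, F at level 41, i, T at level 50).
Notation "\Csum_ ( i : T ) F" := (\big[Cadd/C0]_(i : T) F)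
  (at level 41, F at level 41, i, T at level 50).

Definition fourier (ns : seq nat) (a : Gty ns -> R) (g : Gty ns) : C :=
  \Csum_(h : Gty ns) Cmul (ghat g h) (RtoC (a h)).

Definition mpow (T : finType) (Q : T -> T -> R) : nat -> T -> T -> R :=
  fix mp n := match n with
  | 0 => fun g h => if g == h then R1 else R0
  | n'.+1 => fun g h => \Rsum_(k : T) Rmult (mp n' g k) (Q k h)
  end.

Definition is_mexp (T : finType) (Q P : T -> T -> R) : Prop :=
  forall g h : T,
    Un_cv (fun N => sum_f_R0 (fun n => Rdiv (mpow Q n g h) (INR (Factorial.fact n))) N) (P g h).

Definition Qmat (ns : seq nat) (psi : Gty ns -> R) (g h : Gty ns) : R :=
  psi (gadd h (gopp g)).

(* Rooted trees.  A finite tree is given by a vertex type V, the root leaf   *)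
(* rt and the parent map par (par rt = rt).  Its edges are the pairs         *)
(* (par v, v) for v <> rt, directed away from rt; the edge (par v -> v) is   *)
(* indexed by v.                                                              *)
Definition is_rooted_tree (V : finType) (rt : V) (par : V -> V) : Prop :=
  par rt = rt /\ forall v : V, exists k : nat, iter k par v = rt.

Definition children (V : finType) (rt : V) (par : V -> V) (v : V) : {set V} :=
  [set u | (u != rt) && (par u == v)].

Definition degree (V : finType) (rt : V) (par : V -> V) (v : V) : nat :=
  (#|children rt par v| + (v != rt))%N.

Definition is_leaf (V : finType) (rt : V) (par : V -> V) (v : V) : bool :=
  degree rt par v == 1%N.

(* The type of leaves (the index set of G^m). *)
Definition leaf (V : finType) (rt : V) (par : V -> V) : finType :=
  {v : V | is_leaf rt par v}.

Definition adj (V : finType) (rt : V) (par : V -> V) : rel V :=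
  fun a b => ((b != rt) && (par b == a)) || ((a != rt) && (par a == b)).

Definition path_through (V : finType) (rt : V) (par : V -> V) (a b c : V) : Prop :=
  exists p : seq V,
    [&& path (adj rt par) a p, last a p == b, uniq (a :: p) & c \in a :: p].

(* x is a descendant of v (or v itself): the path from x to the root contains
   the edge (par v -> v), for v <> rt. *)
Definition below (V : finType) (par : V -> V) (v x : V) : bool :=
  connect (fun a b => par a == b) x v.

Definition pprob (ns : seq nat) (V : finType) (rt : V) (par : V -> V)
    (P : V -> Gty ns -> Gty ns -> R) (g : {ffun leaf rt par -> Gty ns}) : R :=
  \big[Rplus/R0]_(sigma : {ffun V -> Gty ns} |
        (sigma rt == gzero) &&
        [forall x : leaf rt par, sigma (val x) == g x])
     \big[Rmult/R1]_(v : V | v != rt) P v (sigma (par v)) (sigma v).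

Definition qfourier (ns : seq nat) (V : finType) (rt : V) (par : V -> V)
    (P : V -> Gty ns -> Gty ns -> R) (g : {ffun leaf rt par -> Gty ns}) : C :=
  \Csum_(h : {ffun leaf rt par -> Gty ns})
     Cmul (\big[Cmul/C1]_(x : leaf rt par) ghat (g x) (h x)) (RtoC (pprob P h)).

Definition fedge (ns : seq nat) (V : finType) (P : V -> Gty ns -> Gty ns -> R)
    (v : V) (h : Gty ns) : R :=
  P v (gzero) h.

Definition wvec (ns : seq nat) (V : finType) (rt : V) (par : V -> V)
    (i j k : leaf rt par) (a b c : Gty ns) : {ffun leaf rt par -> Gty ns} :=
  [ffun x => if x == i then a else if x == j then b else if x == k then c
             else gzero].

From Pilot Require Import Defs.
From HB Require Import structures.
From mathcomp Require Import all_boot all_algebra.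
From Stdlib Require Import Reals Lra.

(* The proof has three ingredients.
   1. Each edge matrix P = exp(Q) with Q_{g,h} = psi(h - g) is translation
      invariant, so P_{g,h} = f(h - g), and its Fourier transform is
      f^(a) = exp(lambda(a)), where lambda(a) = psi^(a) is real (psi is
      symmetric), vanishes at 0 (psi sums to 0) and is even.  Hence f^ is a
      nonzero real function with f^(0) = 1 and f^(-a) = f^(a).
   2. Hendy's factorization q_g = prod_e f_e^(g*_e), with g*_e the sum of g over
      the leaves below e, obtained by the change of
      variables sigma <-> (increments of sigma along the edges), which turns
      the Fourier sum over the tree into a product of independent sums.
   3. A combinatorial analysis of the three leaves i, j, k: the pendant edge
      e is the only edge separating i from {j, k}.  Comparing, edge by edge,
      the three factorizations of q_{w(h,-h,0)}, q_{w(-h,0,h)}, q_{w(0,-h,h)}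
      (an eight-case check on which of i, j, k lie below the edge) yields
      q_{w(h,-h,0)} q_{w(-h,0,h)} = q_{w(0,-h,h)} f_e^(h)^2, and
      q_{w(0,-h,h)} is a product of nonzero factors. *)

Set Implicit Arguments.
Unset Strict Implicit.
Unset Printing Implicit Defensive.
Import GRing.Theory.
Local Notation C := Pilot.Defs.C.
Local Notation C0 := Pilot.Defs.C0.
Local Notation C1 := Pilot.Defs.C1.
Local Open Scope R_scope.

Lemma Cext (z w : C) : z.1 = w.1 -> z.2 = w.2 -> z = w.
Proof. by case: z w => [a b] [c d] /= -> ->. Qed.

Ltac cring := repeat match goal with z : C |- _ => destruct z end;
  apply Cext; rewrite /= /Cadd /Cmul /C1 /C0 /RtoC /=; ring.

Lemma CaddA : associative Cadd. Proof. move=> *; cring. Qed.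
Lemma CaddC : commutative Cadd. Proof. move=> *; cring. Qed.
Lemma Cadd0 : left_id C0 Cadd. Proof. move=> *; cring. Qed.
Lemma CmulA : associative Cmul. Proof. move=> *; cring. Qed.
Lemma CmulC : commutative Cmul. Proof. move=> *; cring. Qed.
Lemma Cmul1 : left_id C1 Cmul. Proof. move=> *; cring. Qed.
Lemma Cmul0l : left_zero C0 Cmul. Proof. move=> *; cring. Qed.
Lemma Cmul0r : right_zero C0 Cmul. Proof. move=> *; cring. Qed.
Lemma CmulDl : left_distributive Cmul Cadd. Proof. move=> *; cring. Qed.
Lemma CmulDr : right_distributive Cmul Cadd. Proof. move=> *; cring. Qed.

HB.instance Definition _ := Monoid.isComLaw.Build C C0 Cadd CaddA CaddC Cadd0.
HB.instance Definition _ := Monoid.isComLaw.Build C C1 Cmul CmulA CmulC Cmul1.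
HB.instance Definition _ := Monoid.isMulLaw.Build C C0 Cmul Cmul0l Cmul0r.
HB.instance Definition _ := Monoid.isAddLaw.Build C Cmul Cadd CmulDl CmulDr.

Lemma RaddA : associative Rplus. Proof. move=> *; ring. Qed.
Lemma RaddC : commutative Rplus. Proof. move=> *; ring. Qed.
Lemma Radd0 : left_id R0 Rplus. Proof. move=> *; ring. Qed.
Lemma RmulA : associative Rmult. Proof. move=> *; ring. Qed.
Lemma RmulC : commutative Rmult. Proof. move=> *; ring. Qed.
Lemma Rmul1 : left_id R1 Rmult. Proof. move=> *; ring. Qed.
Lemma Rmul0l : left_zero R0 Rmult. Proof. move=> *; ring. Qed.
Lemma Rmul0r : right_zero R0 Rmult. Proof. move=> *; ring. Qed.
Lemma RmulDl : left_distributive Rmult Rplus. Proof. move=> *; ring. Qed.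
Lemma RmulDr : right_distributive Rmult Rplus. Proof. move=> *; ring. Qed.

HB.instance Definition _ := Monoid.isComLaw.Build R R0 Rplus RaddA RaddC Radd0.
HB.instance Definition _ := Monoid.isComLaw.Build R R1 Rmult RmulA RmulC Rmul1.
HB.instance Definition _ := Monoid.isMulLaw.Build R R0 Rmult Rmul0l Rmul0r.
HB.instance Definition _ := Monoid.isAddLaw.Build R Rmult Rplus RmulDl RmulDr.

Lemma Cmul_inv (z : C) : z <> C0 -> Cmul z (Cinv z) = C1.
Proof.
case: z => a b Hz.
have Hd : a * a + b * b <> 0.
  move=> E; apply: Hz; have Ha : a = 0 by nra. have Hb : b = 0 by nra.
  by rewrite Ha Hb.
apply: Cext; rewrite /Cinv /= /Rdiv; field; exact: Hd.
Qed.

Lemma Cmul_neq0 (z w : C) : z <> C0 -> w <> C0 -> Cmul z w <> C0.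
Proof.
move=> Hz Hw E; apply: Hw.
by rewrite -(Cmul1 w) -(Cmul_inv Hz) (CmulC z) -CmulA E Cmul0r.
Qed.

Lemma Cdiv_solve (A Z X : C) : Z <> C0 -> A = Cmul Z X -> X = Cdiv A Z.
Proof.
by move=> nzZ ->; rewrite /Cdiv CmulC CmulA (CmulC _ Z) Cmul_inv // Cmul1.
Qed.

Definition Cconj (z : C) : C := (z.1, Ropp z.2).

Lemma Cconj_add z w : Cconj (Cadd z w) = Cadd (Cconj z) (Cconj w).
Proof. apply: Cext => /=; ring. Qed.

Lemma RtoC_add r s : RtoC (r + s) = Cadd (RtoC r) (RtoC s).
Proof. apply: Cext => /=; ring. Qed.

Lemma RtoC_mul r s : RtoC (r * s) = Cmul (RtoC r) (RtoC s).
Proof. apply: Cext => /=; ring. Qed.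

Lemma Cmul_RtoC z r : Cmul z (RtoC r) = (z.1 * r, z.2 * r).
Proof. apply: Cext => /=; ring. Qed.

Section ComplexSums.
Variables (I : Type) (r : seq I) (P : pred I).

Lemma RtoC_sum (F : I -> R) :
  RtoC (\big[Rplus/R0]_(i <- r | P i) F i) = \big[Cadd/C0]_(i <- r | P i) RtoC (F i).
Proof. exact: (big_morph RtoC RtoC_add). Qed.

Lemma fst_sum (F : I -> C) :
  (\big[Cadd/C0]_(i <- r | P i) F i).1 = \big[Rplus/R0]_(i <- r | P i) (F i).1.
Proof. exact: (big_morph fst). Qed.

Lemma snd_sum (F : I -> C) :
  (\big[Cadd/C0]_(i <- r | P i) F i).2 = \big[Rplus/R0]_(i <- r | P i) (F i).2.
Proof. exact: (big_morph snd). Qed.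

Lemma Cconj_sum (F : I -> C) :
  Cconj (\big[Cadd/C0]_(i <- r | P i) F i) = \big[Cadd/C0]_(i <- r | P i) Cconj (F i).
Proof. apply: (big_morph Cconj Cconj_add); apply: Cext => /=; ring. Qed.

End ComplexSums.

Section GroupLaws.
Variable ns : seq nat.
Local Notation G := (Gty ns).

Lemma gaddA : associative (@gadd ns).
Proof.
elim: ns => [|n l IH] /= x y z; first exact/val_inj.
by rewrite addrA IH.
Qed.

Lemma gaddC : commutative (@gadd ns).
Proof.
elim: ns => [|n l IH] /= x y; first exact/val_inj.
by rewrite addrC IH.
Qed.

Lemma gadd0 : left_id gzero (@gadd ns).
Proof.
elim: ns => [|n l IH] /= x; first by apply/val_inj; case: x => [[|]].
by case: x => a b /=; rewrite add0r IH.
Qed.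

Lemma gaddN (x : G) : gadd x (gopp x) = gzero.
Proof.
elim: ns x => [|n l IH] /= x; first exact/val_inj.
by rewrite subrr IH.
Qed.

End GroupLaws.

HB.instance Definition _ ns :=
  Monoid.isComLaw.Build (Gty ns) gzero (@gadd ns) (@gaddA ns) (@gaddC ns) (@gadd0 ns).

Section GroupFacts.
Variable ns : seq nat.
Local Notation G := (Gty ns).

Lemma gaddNl (x : G) : gadd (gopp x) x = gzero.
Proof. by rewrite gaddC gaddN. Qed.

Lemma gadd0r (x : G) : gadd x gzero = x.
Proof. by rewrite gaddC gadd0. Qed.

Lemma gaddKl (a x : G) : gadd (gopp a) (gadd a x) = x.
Proof. by rewrite gaddA gaddNl gadd0. Qed.

Lemma gaddK (a x : G) : gadd (gadd x a) (gopp a) = x.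
Proof. by rewrite -gaddA gaddN gadd0r. Qed.

Lemma gadd_injr (a : G) : injective (fun x => gadd x a).
Proof. by move=> x y /= E; rewrite -(gaddK a x) E gaddK. Qed.

Lemma gopp_uniq (x y : G) : gadd x y = gzero -> y = gopp x.
Proof. by move=> E; rewrite -(gaddKl x y) E gadd0r. Qed.

Lemma goppK (x : G) : gopp (gopp x) = x.
Proof. by symmetry; apply: gopp_uniq; rewrite gaddNl. Qed.

Lemma gopp_inj : injective (@gopp ns).
Proof. by move=> x y E; rewrite -(goppK x) E goppK. Qed.

Lemma goppD (x y : G) : gopp (gadd x y) = gadd (gopp x) (gopp y).
Proof.
symmetry; apply: gopp_uniq.
by rewrite gaddA (gaddC x y) -(gaddA y) gaddN gadd0r gaddN.
Qed.

Lemma gsub_transl (g h a : G) : gadd (gadd h a) (gopp (gadd g a)) = gadd h (gopp g).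
Proof. by rewrite goppD (gaddC (gopp g)) gaddA -(gaddA h) gaddN gadd0r. Qed.

End GroupFacts.

Lemma Cexp2pi_add s t : Cexp2pi (s + t) = Cmul (Cexp2pi s) (Cexp2pi t).
Proof. apply: Cext; rewrite /= Rmult_plus_distr_l ?cos_plus ?sin_plus; ring. Qed.

Lemma Cexp2pi_nat k : Cexp2pi (INR k) = C1.
Proof.
have E : 2 * PI * INR k = 0 + 2 * INR k * PI by ring.
by apply: Cext; rewrite /= E ?cos_period ?sin_period ?cos_0 ?sin_0.
Qed.

Lemma Cexp2pi_0 : Cexp2pi 0 = C1.
Proof. exact: (Cexp2pi_nat 0). Qed.

Lemma Cexp2pi_Nnat k : Cexp2pi (- INR k) = C1.
Proof.
have E : 2 * PI * - INR k = - (2 * PI * INR k) by ring.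
have := Cexp2pi_nat k; rewrite /Cexp2pi E cos_neg sin_neg => -[-> ->].
by apply: Cext => /=; ring.
Qed.

Lemma Cexp2pi_unit t : Cmul (Cexp2pi t) (Cconj (Cexp2pi t)) = C1.
Proof.
apply: Cext => /=; last ring.
have H := sin2_cos2 (2 * PI * t); rewrite /Rsqr in H; rewrite /C1 /=; nra.
Qed.

Lemma Cexp2pi_mod_add n (g a b : nat) : (0 < n)%nat ->
  Cexp2pi (INR (g * ((a + b) %% n.-1.+1)) / INR n) =
  Cmul (Cexp2pi (INR (g * a) / INR n)) (Cexp2pi (INR (g * b) / INR n)).
Proof.
move=> n0; rewrite prednK //.
have Hn : INR n <> 0 by apply: not_0_INR => E; move: n0; rewrite E.
have E : (g * a + g * b = g * ((a + b) %% n) + (g * ((a + b) %/ n)) * n)%nat.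
  by rewrite -mulnDr {1}(divn_eq (a + b) n) mulnDr mulnA addnC.
have E2 : INR (g * ((a + b) %% n)) / INR n =
   INR (g * a) / INR n + INR (g * b) / INR n + - INR (g * ((a + b) %/ n)).
  have E' := f_equal INR E; rewrite !plus_INR (mult_INR _ n) in E'.
  apply: (Rmult_eq_reg_r (INR n)) => //.
  rewrite !Rmult_plus_distr_r /Rdiv !Rmult_assoc !Rinv_l // !Rmult_1_r; lra.
by rewrite E2 Cexp2pi_add Cexp2pi_Nnat Cexp2pi_add CmulC Cmul1.
Qed.

Section Characters.
Variable ns : seq nat.
Hypothesis Hns : all (fun n : nat => (0 < n)%nat) ns.
Local Notation G := (Gty ns).

Lemma ghat_sym (g h : G) : ghat g h = ghat h g.
Proof. by elim: ns g h => [|n l IH] //= g h; rewrite mulnC IH. Qed.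

Lemma ghat_addr (g a b : G) : ghat g (gadd a b) = Cmul (ghat g a) (ghat g b).
Proof.
elim: ns Hns g a b => [|n l IH] /= Hn g a b; first by apply: Cext => /=; ring.
case/andP: Hn => n0 Hl.
rewrite [nat_of_ord _]/= Cexp2pi_mod_add // IH //.
move: (Cexp2pi _) (Cexp2pi _) (ghat g.2 a.2) (ghat g.2 b.2) => *; cring.
Qed.

Lemma ghat_addl (g1 g2 a : G) : ghat (gadd g1 g2) a = Cmul (ghat g1 a) (ghat g2 a).
Proof. by rewrite ghat_sym ghat_addr !(ghat_sym a). Qed.

Lemma ghat_0r (g : G) : ghat g gzero = C1.
Proof.
elim: ns g => [|n l IH] //= g; rewrite IH muln0 /Rdiv Rmult_0_l.
by rewrite Cexp2pi_0 Cmul1.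
Qed.

Lemma ghat_0l (g : G) : ghat gzero g = C1.
Proof. by rewrite ghat_sym ghat_0r. Qed.

Lemma ghat_unit (g a : G) : Cmul (ghat g a) (Cconj (ghat g a)) = C1.
Proof.
elim: ns g a => [|n l IH] //= g a; first by apply: Cext => /=; ring.
move: (IH g.2 a.2) (Cexp2pi_unit (INR (g.1 * a.1) / INR n)).
move: (ghat _ _) (Cexp2pi _) => x y E1 E2.
have -> : Cmul (Cmul y x) (Cconj (Cmul y x)) =
  Cmul (Cmul x (Cconj x)) (Cmul y (Cconj y)) by rewrite /Cconj; cring.
by rewrite E1 E2 Cmul1.
Qed.

Lemma Cinv_uniq (z w1 w2 : C) : Cmul z w1 = C1 -> Cmul z w2 = C1 -> w1 = w2.
Proof.
by move=> E1 E2; rewrite -(Cmul1 w1) -E2 CmulC CmulA (CmulC w1) E1 Cmul1.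
Qed.

Lemma ghat_oppr (g a : G) : ghat g (gopp a) = Cconj (ghat g a).
Proof.
apply: (@Cinv_uniq (ghat g a)); last exact: ghat_unit.
by rewrite -ghat_addr gaddN ghat_0r.
Qed.

Lemma ghat_oppl (g a : G) : ghat (gopp g) a = Cconj (ghat g a).
Proof. by rewrite ghat_sym ghat_oppr ghat_sym. Qed.

End Characters.

Lemma CV_const (c : R) : Un_cv (fun _ => c) c.
Proof. by move=> eps He; exists 0%nat => n _; rewrite /Rdist Rminus_diag Rabs_R0. Qed.

Lemma CV_big (I : Type) (r : seq I) (P : pred I) (u : I -> nat -> R) (l : I -> R) :
  (forall i, P i -> Un_cv (u i) (l i)) ->
  Un_cv (fun N => \big[Rplus/R0]_(i <- r | P i) u i N) (\big[Rplus/R0]_(i <- r | P i) l i).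
Proof.
move=> H; elim: r => [|i r IH].
  by rewrite big_nil; apply: Un_cv_ext (CV_const R0) => n; rewrite big_nil.
rewrite big_cons; case: (boolP (P i)) => Pi.
  by apply: Un_cv_ext (CV_plus _ _ _ _ (H i Pi) IH) => n; rewrite big_cons Pi.
by apply: Un_cv_ext IH => n; rewrite big_cons (negPf Pi).
Qed.

Lemma sum_f_big (f : nat -> R) N : sum_f_R0 f N = \big[Rplus/R0]_(n < N.+1) f n.
Proof.
elim: N => [|N IH]; first by rewrite big_ord1.
by rewrite /= IH [in RHS]big_ord_recr.
Qed.

Section Edge.
Variable ns : seq nat.
Hypothesis Hns : all (fun n : nat => (0 < n)%nat) ns.
Local Notation G := (Gty ns).
Variable psi : G -> R.
Hypothesis Hsum : \big[Rplus/R0]_(g : G) psi g = R0.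
Hypothesis Hsym : forall g, psi g = psi (gopp g).
Variable Pv : G -> G -> R.
Hypothesis HPv : is_mexp (Qmat psi) Pv.
Local Notation Q := (Qmat psi).

Lemma mpow_transl n (a g h : G) : mpow Q n (gadd g a) (gadd h a) = mpow Q n g h.
Proof.
elim: n g h => [|n IH] g h /=; first by rewrite (inj_eq (@gadd_injr _ a)).
rewrite (reindex_inj (@gadd_injr _ a)) /=; apply: eq_bigr => k _.
by rewrite IH /Qmat gsub_transl.
Qed.

Lemma P_transl (a g h : G) : Pv (gadd g a) (gadd h a) = Pv g h.
Proof.
apply: UL_sequence (HPv (gadd g a) (gadd h a)) _.
apply: Un_cv_ext (HPv g h) => N; apply: sum_eq => n _; by rewrite mpow_transl.
Qed.

Lemma P_f (g h : G) : Pv g h = Pv gzero (gadd h (gopp g)).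
Proof. by rewrite -(P_transl (gopp g)) gaddN. Qed.

Local Notation psic := (fourier psi).

Lemma psic_opp (a : G) : psic (gopp a) = psic a.
Proof.
rewrite /fourier [RHS](reindex_inj (@gopp_inj ns)) /=.
apply: eq_bigr => x _; rewrite ghat_oppl // -ghat_oppr //.
by congr (Cmul _ (RtoC _)); exact: Hsym.
Qed.

Lemma psic_conj (a : G) : psic (gopp a) = Cconj (psic a).
Proof.
rewrite /fourier Cconj_sum; apply: eq_bigr => x _.
by rewrite ghat_oppl //; apply: Cext => /=; ring.
Qed.

(* psi^ is real, since psi is symmetric. *)
Lemma psic_real (a : G) : psic a = RtoC (psic a).1.
Proof.
have := psic_conj a; rewrite psic_opp.
by case: (psic a) => z1 z2 [] E; apply: Cext => //=; lra.
Qed.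

(* lambda(a) = psi^(a): the eigenvalue of Q on the character a. *)
Definition psi_eig (a : G) : R := (psic a).1.

Lemma psi_eig_opp (a : G) : psi_eig (gopp a) = psi_eig a.
Proof. by rewrite /psi_eig psic_opp. Qed.

Lemma psi_eig0 : psi_eig gzero = R0.
Proof.
rewrite /psi_eig /fourier fst_sum -[in RHS]Hsum; apply: eq_bigr => x _.
by rewrite ghat_0l //=; ring.
Qed.

Lemma mpow_fourier n (a : G) :
  \big[Cadd/C0]_(x : G) Cmul (ghat a x) (RtoC (mpow Q n gzero x)) = RtoC (psi_eig a ^ n).
Proof.
elim: n => [|n IH] /=.
  rewrite (bigD1 gzero) //= eqxx big1 => [|x /negPf]; last first.
    by rewrite eq_sym => ->; apply: Cext => /=; ring.
  by rewrite ghat_0r //; apply: Cext => /=; ring.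
have row_step k : \big[Cadd/C0]_(x : G) Cmul (ghat a x) (RtoC (Q k x)) =
    Cmul (ghat a k) (psic a).
  rewrite (reindex_inj (@gadd_injr _ k)) /fourier big_distrr /=.
  apply: eq_bigr => x _; rewrite /Qmat gaddK ghat_addr //; cring.
transitivity (\big[Cadd/C0]_(k : G) Cmul (RtoC (mpow Q n gzero k))
   (\big[Cadd/C0]_(x : G) Cmul (ghat a x) (RtoC (Q k x)))).
  under eq_bigr do rewrite RtoC_sum big_distrr /=.
  rewrite exchange_big /=; apply: eq_bigr => k _; rewrite big_distrr /=.
  by apply: eq_bigr => x _; rewrite RtoC_mul; cring.
under eq_bigr do rewrite row_step CmulA (CmulC (RtoC _)).
by rewrite -big_distrl /= IH psic_real -RtoC_mul Rmult_comm.
Qed.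

Lemma lim_comb (c : G -> R) (t : nat -> R) L :
  (forall n, \big[Rplus/R0]_(x : G) (c x * mpow Q n gzero x) = t n) ->
  Un_cv (fun N => sum_f_R0 (fun n => / INR (Factorial.fact n) * t n) N) L ->
  \big[Rplus/R0]_(x : G) (c x * Pv gzero x) = L.
Proof.
move=> Ht HL; apply: UL_sequence HL.
have H1 := @CV_big G (index_enum G) predT
  (fun x N => c x * sum_f_R0 (fun n => mpow Q n gzero x / INR (Factorial.fact n)) N)
  (fun x => c x * Pv gzero x) (fun x _ => CV_mult _ _ _ _ (CV_const (c x)) (HPv gzero x)).
apply: Un_cv_ext H1 => N.
rewrite sum_f_big.
under eq_bigr do rewrite sum_f_big big_distrr /=.
rewrite exchange_big /=; apply: eq_bigr => n _; rewrite -Ht big_distrr /=.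
by apply: eq_bigr => x _; rewrite /Rdiv; ring.
Qed.

Lemma fourier_f (a : G) : fourier (fun h => Pv gzero h) a = RtoC (exp (psi_eig a)).
Proof.
apply: Cext; rewrite /fourier ?fst_sum ?snd_sum.
  under eq_bigr do rewrite Cmul_RtoC /=.
  apply: (lim_comb (t := fun n => psi_eig a ^ n)); last exact: (proj2_sig (exist_exp _)).
  move=> n; have := f_equal fst (mpow_fourier n a); rewrite fst_sum /= => <-.
  by apply: eq_bigr => x _ /=; ring.
under eq_bigr do rewrite Cmul_RtoC /=.
apply: (lim_comb (t := fun n => R0)).
  move=> n; have := f_equal snd (mpow_fourier n a); rewrite snd_sum /= => E.
  by apply: eq_trans E; apply: eq_bigr => x _ /=; ring.
apply: Un_cv_ext (CV_const R0) => N; elim: N => [|N IH] /=; ring_simplify; try lra.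
by rewrite -IH; ring.
Qed.

Lemma fourier_f_0 : fourier (fun h => Pv gzero h) gzero = C1.
Proof. by rewrite fourier_f psi_eig0 exp_0. Qed.

Lemma fourier_f_opp (a : G) :
  fourier (fun h => Pv gzero h) (gopp a) = fourier (fun h => Pv gzero h) a.
Proof. by rewrite !fourier_f psi_eig_opp. Qed.

Lemma fourier_f_neq0 (a : G) : fourier (fun h => Pv gzero h) a <> C0.
Proof. by rewrite fourier_f => -[E]; have := exp_pos (psi_eig a); rewrite E; lra. Qed.

End Edge.

Section Tree.
Variables (V : finType) (rt : V) (par : V -> V).
Hypothesis Htree : is_rooted_tree rt par.

Lemma belowE u x : below par u x = fconnect par x u.
Proof. by []. Qed.

Lemma below_refl u : below par u u.
Proof. exact: connect0. Qed.

Lemma below_step u x : x != u -> below par u x = below par u (par x).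
Proof. by move=> /negPf H; rewrite !belowE fconnect_eqVf H. Qed.

Lemma iter_rt n : iter n par rt = rt.
Proof. by case: Htree => H _; elim: n => //= n ->. Qed.

Lemma below_rt u : below par u rt -> u = rt.
Proof. by rewrite belowE => /iter_findex <-; exact: iter_rt. Qed.

Lemma iter_mul v m t : iter m par v = v -> iter (t * m) par v = v.
Proof. by move=> H; elim: t => [|t IH] //=; rewrite mulSn iterD IH H. Qed.

Lemma not_below_par v : v != rt -> ~~ below par v (par v).
Proof.
move=> vrt; apply/negP; rewrite belowE => /iter_findex.
set m := findex _ _ _ => Hm.
have Hm1 : iter m.+1 par v = v by rewrite iterSr.
case: Htree => _ /(_ v) [k Hk].
have := iter_mul k Hm1.
have Hle : (k <= k * m.+1)%nat by apply: leq_pmulr.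
rewrite -(subnK Hle) iterD Hk iter_rt => E.
by move: vrt; rewrite -E eqxx.
Qed.

Lemma par_neq v : v != rt -> par v != v.
Proof.
by move=> vrt; apply/eqP => E; move: (not_below_par vrt); rewrite E below_refl.
Qed.

Lemma below_child v x : below par v x -> x != v ->
  exists c, [/\ par c = v, below par c x & c != v].
Proof.
rewrite belowE => Hc xv.
set n := findex par x v.
have Hn : iter n par x = v by apply: iter_findex.
have n0 : (0 < n)%nat.
  rewrite lt0n; apply/negP => /eqP E; move: Hn; rewrite E /= => E'.
  by move: xv; rewrite E' eqxx.
exists (iter n.-1 par x); split.
- by rewrite -iterS prednK.
- by rewrite belowE fconnect_iter.
apply/negP => /eqP E.
have Hlt : (n.-1 < order par x)%nat.
  by apply: leq_ltn_trans (leq_pred n) (findex_max Hc).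
have := findex_iter Hlt; rewrite E -/n => E2.
have : (n.-1 < n)%nat by rewrite prednK.
by rewrite -{1}E2 ltnn.
Qed.

(* ancd u x: the edge (par u -> u) lies on the path from x to the root. *)
Definition ancd (u x : V) : bool := (u != rt) && below par u x.

Lemma ancdE u x : u != rt -> ancd u x = below par u x.
Proof. by rewrite /ancd => ->. Qed.

Lemma ancd_rt u : ancd u rt = false.
Proof. by rewrite /ancd; case: eqP => //= urt; apply/negP => /below_rt. Qed.

Lemma ancd_step v u : v != rt -> ancd u v = (u == v) || ancd u (par v).
Proof.
move=> vrt; rewrite /ancd; case: (eqVneq u v) => [->|uv] /=.
  by rewrite vrt below_refl.
by rewrite below_step // eq_sym.
Qed.

Lemma ancd_par v : v != rt -> ancd v (par v) = false.
Proof. by move=> vrt; rewrite /ancd vrt (negPf (not_below_par vrt)). Qed.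

End Tree.

Section Hendy.
Variable ns : seq nat.
Hypothesis Hns : all (fun n : nat => (0 < n)%nat) ns.
Local Notation G := (Gty ns).
Variables (V : finType) (rt : V) (par : V -> V).
Hypothesis Htree : is_rooted_tree rt par.
Variable P : V -> G -> G -> R.
Hypothesis HPf : forall v, v != rt -> forall a b, P v a b = fedge P v (gadd b (gopp a)).
Local Notation anc := (ancd rt par).
Local Notation L := (leaf rt par).

(* Change of variables between labellings sigma (with sigma rt = 0) and
   edge increments d: sigma v is the sum of d over the edges above v. *)
Definition fromD (d : {ffun V -> G}) : {ffun V -> G} :=
  [ffun v => \big[@gadd ns/gzero]_(u | anc u v) d u].
Definition toD (s : {ffun V -> G}) : {ffun V -> G} :=
  [ffun v => if v == rt then gzero else gadd (s v) (gopp (s (par v)))].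

Lemma fromD_rec d v : v != rt -> fromD d v = gadd (d v) (fromD d (par v)).
Proof.
move=> vrt; rewrite !ffunE (bigD1 v) /=; last by rewrite /ancd vrt below_refl.
congr gadd; apply: eq_bigl => u; rewrite ancd_step //.
by case: (eqVneq u v) => [->|] /=; [rewrite ancd_par | rewrite andbT].
Qed.

Lemma fromD_rt d : fromD d rt = gzero.
Proof. by rewrite ffunE big_pred0 // => u; exact: ancd_rt. Qed.

Lemma toD_fromD (d : {ffun V -> G}) : d rt = gzero -> toD (fromD d) = d.
Proof.
move=> drt; apply/ffunP => v; rewrite ffunE.
by case: (eqVneq v rt) => [->|vrt] //; rewrite fromD_rec // gaddK.
Qed.

Lemma fromD_toD (s : {ffun V -> G}) : s rt = gzero -> fromD (toD s) = s.
Proof.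
move=> srt; apply/ffunP => v.
case: Htree => _ /(_ v) [k Hk]; elim: k v Hk => [|k IH] v Hk.
  by rewrite /= in Hk; rewrite Hk fromD_rt.
case: (eqVneq v rt) => [->|vrt]; first by rewrite fromD_rt.
rewrite fromD_rec // IH; last by rewrite -iterSr.
by rewrite ffunE (negPf vrt) -gaddA gaddNl gadd0r.
Qed.

Definition starg (g : {ffun L -> G}) (u : V) : G :=
  \big[@gadd ns/gzero]_(x | anc u (val x)) g x.

(* Summing out the leaf labels h: only h = sigma on the leaves survives. *)
Lemma qfourier_labellings (g : {ffun L -> G}) :
  qfourier P g = \big[Cadd/C0]_(s : {ffun V -> G} | s rt == gzero)
   Cmul (\big[Cmul/C1]_(x : L) ghat (g x) (s (val x)))
        (RtoC (\big[Rmult/R1]_(v | v != rt) P v (s (par v)) (s v))).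
Proof.
rewrite /qfourier /pprob.
under eq_bigr do rewrite RtoC_sum big_distrr /=.
rewrite (exchange_big_dep (fun s : {ffun V -> G} => s rt == gzero)) /=; last first.
  by move=> h s _ /andP[].
apply: eq_bigr => s srt.
rewrite (big_pred1 [ffun x => s (val x)]); last first.
  move=> h /=; rewrite srt /=; apply/forallP/eqP => [H|->].
    by apply/ffunP => x; rewrite ffunE; symmetry; apply/eqP/H.
  by move=> x; rewrite ffunE.
by congr Cmul; apply: eq_bigr => x _; rewrite ffunE.
Qed.

Lemma labelling_summand (g : {ffun L -> G}) (d : {ffun V -> G}) : d rt = gzero ->
  Cmul (\big[Cmul/C1]_(x : L) ghat (g x) (fromD d (val x)))
       (RtoC (\big[Rmult/R1]_(v | v != rt) P v (fromD d (par v)) (fromD d v))) =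
  \big[Cmul/C1]_(u | u != rt) Cmul (ghat (starg g u) (d u)) (RtoC (fedge P u (d u))).
Proof.
move=> drt; rewrite big_split /=; congr Cmul; last first.
  rewrite (big_morph RtoC RtoC_mul (erefl C1)); apply: eq_bigr => v vrt.
  rewrite HPf //; congr (RtoC (fedge P v _)).
  by rewrite -[in RHS](toD_fromD drt) /toD ffunE (negPf vrt).
under eq_bigr do rewrite /fromD ffunE (big_morph (ghat _) (ghat_addr Hns _) (ghat_0r _)).
rewrite (exchange_big_dep (fun u => u != rt)) /=; last by move=> x u _ /andP[].
apply: eq_bigr => u _; rewrite /starg.
by rewrite (big_morph (fun a => ghat a (d u)) (fun a b => ghat_addl Hns a b (d u))
  (ghat_0l (d u))).
Qed.

Theorem hendy (g : {ffun L -> G}) :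
  qfourier P g = \big[Cmul/C1]_(u | u != rt) fourier (fedge P u) (starg g u).
Proof.
rewrite qfourier_labellings (reindex_onto fromD toD); last first.
  by move=> s /eqP; apply: fromD_toD.
rewrite (eq_bigl (fun d : {ffun V -> G} => d rt == gzero)); last first.
  move=> d; rewrite fromD_rt eqxx /=; apply/eqP/eqP => [<-|/toD_fromD //].
  by rewrite ffunE eqxx.
rewrite (eq_bigr _ (fun d drt => labelling_summand g (eqP drt))).
(* Exchange the sum over increments and the product over edges. *)
rewrite (big_distr_big_dep gzero) /=; apply: eq_bigl => d.
apply/idP/familyP => [/eqP drt u|H].
  rewrite unfold_in /=; case: (eqVneq u rt) => [->|urt] /=.
    by rewrite inE drt.
  by rewrite !unfold_in.
by have := H rt; rewrite unfold_in /= eqxx /= inE.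
Qed.

End Hendy.

Section LeafGeometry.
Variables (V : finType) (rt : V) (par : V -> V).
Hypothesis Htree : is_rooted_tree rt par.

Lemma path_cross u a p : u != rt -> path (adj rt par) a p ->
  below par u a != below par u (last a p) -> (u \in a :: p) && (par u \in a :: p).
Proof.
move=> urt; elim: p a => [|b p IH] a /=; first by rewrite eqxx.
case/andP=> Hab Hp Hne.
case: (eqVneq (below par u a) (below par u b)) => [Eab|Nab].
  have := IH b Hp; rewrite -Eab => /(_ Hne) /andP[H1 H2].
  by apply/andP; split; rewrite in_cons ?H1 ?H2 orbT.
case/orP: Hab => /andP[_ /eqP E].
  have bu : b = u.
    by apply/eqP; apply: contraNT Nab => bu; rewrite -E (below_step _ bu).
  by rewrite !in_cons -bu E !eqxx !orbT.
have au : a = u.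
  by apply/eqP; apply: contraNT Nab => au; rewrite -E (below_step _ au).
by rewrite !in_cons au -E au !eqxx !orbT.
Qed.

Lemma path_side u j k nu : u != rt -> path_through rt par j k nu ->
  below par u j = below par u k -> below par u nu = below par u j.
Proof.
move=> urt [p /and4P[Hp /eqP Hl Hu Hnu]] Ejk.
case/splitPl: Hnu Hp Hl Hu => p1 p2 Enu.
rewrite cat_path last_cat Enu => /andP[Hp1 Hp2] Hl Hu.
apply/eqP; rewrite eq_sym; apply/negPn/negP => Hne.
have /andP[u1 pu1] : (u \in j :: p1) && (par u \in j :: p1).
  by apply: path_cross urt Hp1 _; rewrite Enu.
have /andP[u2 pu2] : (u \in nu :: p2) && (par u \in nu :: p2).
  by apply: path_cross urt Hp2 _; rewrite Hl -Ejk eq_sym.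
have Hdis x : x \in j :: p1 -> x \in p2 -> False.
  move=> H1 H2; move: Hu; rewrite -cat_cons cat_uniq => /and3P[_ /hasP H _].
  by apply: H; exists x.
have Eu : u = nu.
  by move: u2; rewrite in_cons => /orP[/eqP //|H]; case: (Hdis _ u1 H).
have Epu : par u = nu.
  by move: pu2; rewrite in_cons => /orP[/eqP //|H]; case: (Hdis _ pu1 H).
by move: (par_neq Htree urt); rewrite Epu Eu eqxx.
Qed.

Lemma leaf_nochild v c : v != rt -> is_leaf rt par v -> c != rt -> par c != v.
Proof.
move=> vrt; rewrite /is_leaf /degree vrt addn1 eqSS cards_eq0 => /eqP E crt.
apply/negP => pc; have : c \in children rt par v by rewrite inE crt pc.
by rewrite E inE.
Qed.

Lemma below_leaf v x : v != rt -> is_leaf rt par v -> below par v x -> x = v.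
Proof.
move=> vrt lv Hb; apply/eqP; apply/negPn/negP => xv.
have [c [pc _ cv]] := below_child Hb xv.
have crt : c != rt by apply: contra_neq cv => crt; rewrite -pc crt; case: Htree.
by move: (leaf_nochild vrt lv crt); rewrite pc eqxx.
Qed.

Lemma leaf_par_rt v c : is_leaf rt par v -> c != rt -> par c = v -> v = rt.
Proof.
case: (eqVneq v rt) => // vrt lv crt pc.
by move: (leaf_nochild vrt lv crt); rewrite pc eqxx.
Qed.

Lemma below_root_child c x : is_leaf rt par rt -> c != rt -> par c = rt ->
  x != rt -> below par c x.
Proof.
rewrite /is_leaf /degree eqxx addn0 => /cards1P [y Ey] crt pc xrt.
have [_ /(_ x) [n Hn]] := Htree.
have Hbr : below par rt x by rewrite belowE; have := fconnect_iter par n x; rewrite Hn.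
have [c' [pc' Hc' c'rt]] := below_child Hbr xrt.
have child z : z != rt -> par z = rt -> z = y.
  by move=> zrt pz; apply/set1P; rewrite -Ey inE zrt pz eqxx.
by rewrite (child c crt pc) -(child c' c'rt pc').
Qed.

End LeafGeometry.

Definition gsel (ns : seq nat) (b : bool) (a : Gty ns) : Gty ns :=
  if b then a else gzero.

(* For an even F with F(0) = 1
   and an edge having i, j, k below it according to bi, bj, bk, the factors of
   q_{w(h,-h,0)} q_{w(-h,0,h)} and of q_{w(0,-h,h)} agree, except for the
   extra factor F(h)^2 when the edge separates i from {j, k}. *)
Lemma triple_factor (ns : seq nat) (F : Gty ns -> C)
    (F0 : F gzero = C1) (FN : forall a, F (gopp a) = F a)
    (bi bj bk : bool) (h : Gty ns) :
  Cmul (F (gadd (gsel bi h) (gadd (gsel bj (gopp h)) (gsel bk gzero))))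
       (F (gadd (gsel bi (gopp h)) (gadd (gsel bj gzero) (gsel bk h)))) =
  Cmul (F (gadd (gsel bi gzero) (gadd (gsel bj (gopp h)) (gsel bk h))))
       (if (bi != bj) && (bj == bk) then Cmul (F h) (F h) else C1).
Proof.
by case: bi bj bk => [] [] [];
  rewrite /= ?gadd0 ?gadd0r ?gaddN ?gaddNl ?F0 ?FN; cring.
Qed.

Section Cherry.
Variable ns : seq nat.
Local Notation G := (Gty ns).
Variables (V : finType) (rt : V) (par : V -> V).
Hypothesis Htree : is_rooted_tree rt par.
Hypothesis Hroot : is_leaf rt par rt.
Variables (e nu : V) (i j k : leaf rt par).
Hypothesis He : e != rt.
Hypothesis Hpend : ((val i == e) && (nu == par e)) || ((val i == par e) && (nu == e)).
Hypothesis Hnu : ~~ is_leaf rt par nu.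
Hypotheses (Hji : j != i) (Hki : k != i).
Hypothesis Hjk : path_through rt par (val j) (val k) nu.

Definition separates (u : V) : bool :=
  (below par u (val i) != below par u (val j)) &&
  (below par u (val j) == below par u (val k)).

(* A path through the internal vertex nu joins two distinct leaves. *)
Lemma leaves_kj_neq : k != j.
Proof.
apply/negP => /eqP Ekj; move: Hjk; rewrite Ekj => -[p /and4P[Hp /eqP Hl Hu Hn]].
case: p Hp Hl Hu Hn => [|b p] /= _ Hl.
  by move=> _; rewrite inE => /eqP E; move: Hnu; rewrite E (valP j).
by move=> /andP[Hnot _] _; move: Hnot; rewrite -Hl mem_last.
Qed.

Lemma separates_pendant : separates e.
Proof.
have vneq (x : leaf rt par) : x != i -> val x != val i.
  by move=> xi; rewrite (inj_eq val_inj).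
case/orP: Hpend => /andP[/eqP Ei _].
  (* i is the leaf below e: no other leaf is below e. *)
  have le : is_leaf rt par e by rewrite -Ei (valP i).
  have nb (x : leaf rt par) : x != i -> below par e (val x) = false.
    move=> xi; apply/negP => /(below_leaf Htree He le) xe.
    by move: (vneq x xi); rewrite xe Ei eqxx.
  by rewrite /separates Ei below_refl !nb.
(* i is the parent of e, hence the root leaf: all other leaves are below e. *)
have irt : val i = rt by apply: (leaf_par_rt (valP i) He); rewrite Ei.
have b (x : leaf rt par) : x != i -> below par e (val x).
  move=> xi; apply: (below_root_child Htree Hroot He); first by rewrite -Ei irt.
  by move: (vneq x xi); rewrite irt.
rewrite /separates irt !b // eqxx andbT.
by apply/negP => /eqP /(below_rt Htree) erT; move: He; rewrite erT eqxx.
Qed.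

Lemma separates_only_pendant u : u != rt -> u != e -> ~~ separates u.
Proof.
move=> urt ue; rewrite /separates negb_and negbK orbC -implyNb; apply/implyP.
move=> /negPn /eqP Ejk; rewrite -(path_side Htree urt Hjk Ejk).
(* i and nu are the two endpoints of e, which u does not separate. *)
have Hs := below_step par (u:=u) (x:=e); rewrite eq_sym in Hs.
by case/orP: Hpend => /andP[/eqP -> /eqP ->]; rewrite Hs.
Qed.

Lemma separatesP u : u != rt -> separates u = (u == e).
Proof.
move=> urt; case: (eqVneq u e) => [->|ue]; first exact: separates_pendant.
exact/negbTE/separates_only_pendant.
Qed.

Lemma starg_wvec (a b c : G) u : u != rt ->
  starg (wvec i j k a b c) u =
  gadd (gsel (below par u (val i)) a)
       (gadd (gsel (below par u (val j)) b) (gsel (below par u (val k)) c)).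
Proof.
move=> urt; rewrite -!(@ancdE _ rt par u) // /starg big_mkcond (bigD1 i) //= (bigD1 j) //= ?Hji //.
rewrite (bigD1 k) //= ?Hki ?leaves_kj_neq // big1 => [|x /andP[/andP[xi xj] xk]].
  by rewrite !ffunE eqxx (negPf Hji) eqxx (negPf Hki) (negPf leaves_kj_neq) eqxx gadd0r.
by rewrite ffunE (negPf xi) (negPf xj) (negPf xk); case: ifP.
Qed.

Lemma cherry_product (F : V -> G -> C)
    (F0 : forall u, u != rt -> F u gzero = C1)
    (FN : forall u a, u != rt -> F u (gopp a) = F u a) (h : G) :
  Cmul (\big[Cmul/C1]_(u | u != rt) F u (starg (wvec i j k h (gopp h) gzero) u))
       (\big[Cmul/C1]_(u | u != rt) F u (starg (wvec i j k (gopp h) gzero h) u)) =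
  Cmul (\big[Cmul/C1]_(u | u != rt) F u (starg (wvec i j k gzero (gopp h) h) u))
       (Cmul (F e h) (F e h)).
Proof.
rewrite -big_split /=.
rewrite (eq_bigr (fun u => Cmul (F u (starg (wvec i j k gzero (gopp h) h) u))
    (if u == e then Cmul (F u h) (F u h) else C1))); last first.
  move=> u urt; rewrite !starg_wvec // -(separatesP urt).
  exact: (triple_factor (F0 u urt) (FN u ^~ urt)).
rewrite big_split /=; congr Cmul.
rewrite (bigD1 e) //= eqxx big1 => [|u /andP[_ /negPf ->] //].
by rewrite CmulC Cmul1.
Qed.

End Cherry.
Local Close Scope R_scope.

Theorem mainTheorem5
  (ns : seq nat) (Hns : all (fun n => 0 < n)%N ns)
  (V : finType) (rt : V) (par : V -> V)
  (Htree : is_rooted_tree rt par) (Hroot : is_leaf rt par rt)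
  (psi : V -> Gty ns -> R)
  (Hpsi_sum : forall v, v != rt -> \big[Rplus/R0]_(g : Gty ns) psi v g = R0)
  (Hpsi_sym : forall v, v != rt -> forall g, psi v g = psi v (gopp g))
  (P : V -> Gty ns -> Gty ns -> R)
  (HP : forall v, v != rt -> is_mexp (Qmat (psi v)) (P v))
  (e : V) (He : e != rt) (i : leaf rt par) (nu : V)
  (Hpend : ((val i == e) && (nu == par e)) || ((val i == par e) && (nu == e)))
  (Hnu : ~~ is_leaf rt par nu)
  (j k : leaf rt par) (Hji : j != i) (Hki : k != i)
  (Hjk : path_through rt par (val j) (val k) nu) :
  forall h : Gty ns,
    qfourier P (wvec i j k gzero (gopp h) h) <> C0 /\
    Cmul (fourier (fedge P e) h) (fourier (fedge P e) h) =
    Cdiv (Cmul (qfourier P (wvec i j k h (gopp h) gzero))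
               (qfourier P (wvec i j k (gopp h) gzero h)))
         (qfourier P (wvec i j k gzero (gopp h) h)).
Proof.
move=> h.
set F := fun u => fourier (fedge P u).
(* Each edge matrix is a function of differences, so Hendy's theorem applies. *)
have HPf v : v != rt -> forall a b, P v a b = fedge P v (gadd b (gopp a)).
  by move=> vrt a b; apply: (P_f (HP v vrt)).
have Hq := hendy Hns Htree HPf.
have q0_neq0 : qfourier P (wvec i j k gzero (gopp h) h) <> C0.
  rewrite Hq; apply: (big_ind (fun z => z <> C0)) => [E||u urt].
  - by apply: R1_neq_R0; exact: (f_equal fst E).
  - exact: Cmul_neq0.
  exact: (fourier_f_neq0 Hns (Hpsi_sym u urt) (HP u urt)).
split=> //; apply: Cdiv_solve => //; rewrite !Hq.
apply: (cherry_product Htree Hroot He Hpend Hnu Hji Hki Hjk (F := F)) => u.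
  by move=> urt; apply: (fourier_f_0 Hns (Hpsi_sum u urt) (Hpsi_sym u urt) (HP u urt)).
by move=> a urt; apply: (fourier_f_opp Hns (Hpsi_sym u urt) (HP u urt)).
Qed.
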